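(* Let $R$ be an integral domain of characteristic zero and let $n$ be a positive integer. If $d_1,\dots,d_n$ are nonzero derivations on $R$, then $d_1\circ\cdots\circ d_n\in\mathcal{D}^n(R)\setminus\mathcal{D}^{n-1}(R)$, i.e. it is a derivation of order exactly $n$.
   Context: All rings are commutative with unit. A derivation on $R$ is a map $d\colon R\to R$ with $d(x+y)=d(x)+d(y)$ and $d(xy)=d(x)y+d(y)x$. Inductively: $\mathcal{D}^{-1}(R)=\emptyset$, $\mathcal{D}^0(R)=\{0\}$; for $n>0$, $D\in\mathcal{D}^n(R)$ (derivation of order at most $n$) if $D$ is additive and $D(xy)-D(x)y-D(y)x=B(x,y)$ for all $x,y\in R$, where for each fixed value of one variable, $B$ is a member of $\mathcal{D}^{n-1}(R)$ in the other variable. *)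

From HB Require Import structures.
From mathcomp Require Import all_boot all_order all_algebra.
Set Implicit Arguments. Unset Strict Implicit. Unset Printing Implicit Defensive.
Import GRing.Theory.
Local Open Scope ring_scope.

Definition is_derivation (R : comNzRingType) (d : R -> R) : Prop :=
  (forall x y : R, d (x + y) = d x + d y) /\
  (forall x y : R, d (x * y) = d x * y + d y * x).

(* is_der_ord n D  <->  D \in D^n(R) (derivation of order at most n). *)
Fixpoint is_der_ord (R : comNzRingType) (n : nat) (D : R -> R) : Prop :=
  match n with
  | 0%N => forall x, D x = 0
  | m.+1 =>
      (forall x y : R, D (x + y) = D x + D y) /\
      (forall x : R, is_der_ord m (fun y => D (x * y) - D x * y - D y * x)) /\
      (forall y : R, is_der_ord m (fun x => D (x * y) - D x * y - D y * x))
  end.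

Definition comp_ders (R : Type) (n : nat) (d : 'I_n -> R -> R) : R -> R :=
  foldr (fun f g => f \o g) id [seq d i | i <- enum 'I_n].

From mathcomp Require Import all_boot all_order all_algebra.
From mathcomp Require Import ring.
From Stdlib Require Import Classical.
Set Implicit Arguments. Unset Strict Implicit. Unset Printing Implicit Defensive.
Import GRing.Theory.
Local Open Scope ring_scope.

(* Write B_x D y := D(xy) - D(x) y - D(y) x (the paper's B(x,y), [leibniz_gap]).
   The identity B_x (d o D) y = d (B_x D y) + D(x) d(y) + d(x) D(y) shows by
   induction that d o D has order n + 1 whenever D has order n, so
   d_1 o ... o d_n has order at most n.  Conversely a map of order at most m is
   killed by m-fold iteration of B_z, while the same identity evaluates the
   (n-1)-fold iterate of B_z on d_1 o ... o d_n at z to n! d_1(z) ... d_n(z).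
   In characteristic zero this is nonzero once z is a common non-root of the
   d_i, which exists because an additive map vanishes at most once on a line
   w + t u (t in N) unless it vanishes at both w and u. *)

Section AdditiveMaps.
Variables (V W : zmodType) (f : V -> W).
Hypothesis fD : {morph f : x y / x + y}.

Lemma addmorph0 : f 0 = 0.
Proof. by apply: (addrI (f 0)); rewrite -fD !addr0. Qed.

Lemma addmorphB x y : f (x - y) = f x - f y.
Proof. by apply: (addrI (f y)); rewrite -fD addrC subrK addrC subrK. Qed.

Lemma addmorphMn x t : f (x *+ t) = f x *+ t.
Proof. by elim: t => [|t IH]; rewrite ?addmorph0 // !mulrS fD IH. Qed.

End AdditiveMaps.

Section DerivationOrder.
Variable R : comNzRingType.
Implicit Types (D G : R -> R) (d : R -> R) (x y z : R).

Definition leibniz_gap x D : R -> R := fun y => D (x * y) - D x * y - D y * x.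

Lemma leibniz_gapC x y D : leibniz_gap x D y = leibniz_gap y D x.
Proof. by rewrite /leibniz_gap mulrC; ring. Qed.

Lemma eq_leibniz_gap x D1 D2 :
  D1 =1 D2 -> leibniz_gap x D1 =1 leibniz_gap x D2.
Proof. by move=> eqD y; rewrite /leibniz_gap !eqD. Qed.

Lemma eq_der_ord m D1 D2 : D1 =1 D2 -> is_der_ord m D1 -> is_der_ord m D2.
Proof.
elim: m D1 D2 => [|m IH] D1 D2 eqD /=; first by move=> D1_0 x; rewrite -eqD.
move=> [D1_add [D1_gapl D1_gapr]]; split; last split.
- by move=> x y; rewrite -!eqD.
- by move=> x; apply: IH (D1_gapl x) => y; rewrite !eqD.
- by move=> y; apply: IH (D1_gapr y) => x; rewrite !eqD.
Qed.

Lemma der_ordS m D : {morph D : x y / x + y} ->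
  (forall x, is_der_ord m (leibniz_gap x D)) -> is_der_ord m.+1 D.
Proof.
move=> D_add D_gap; do 2![split=> //].
by move=> y; apply: eq_der_ord (D_gap y) => x; rewrite leibniz_gapC.
Qed.

Lemma der_ord_gap m x D : is_der_ord m.+1 D -> is_der_ord m (leibniz_gap x D).
Proof. by case=> _ [/(_ x)]. Qed.

Lemma der_ord_additive m D : is_der_ord m D -> {morph D : x y / x + y}.
Proof. by case: m => [D0 x y|m /= []//]; rewrite !D0 addr0. Qed.

Lemma der_ordD m D1 D2 :
  is_der_ord m D1 -> is_der_ord m D2 -> is_der_ord m (D1 \+ D2).
Proof.
elim: m D1 D2 => [|m IH] D1 D2 ordD1 ordD2; first by move=> x /=; rewrite ordD1 ordD2 addr0.
apply: der_ordS => [x y|x].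
  by rewrite /= (der_ord_additive ordD1) (der_ord_additive ordD2); ring.
apply: eq_der_ord (IH _ _ (der_ord_gap x ordD1) (der_ord_gap x ordD2)) => y.
by rewrite /leibniz_gap /=; ring.
Qed.

Lemma der_ordMl m c D : is_der_ord m D -> is_der_ord m (fun y => c * D y).
Proof.
elim: m D => [|m IH] D ordD; first by move=> x /=; rewrite ordD mulr0.
apply: der_ordS => [x y|x]; first by rewrite (der_ord_additive ordD) mulrDr.
apply: eq_der_ord (IH _ (der_ord_gap x ordD)) => y.
by rewrite /leibniz_gap; ring.
Qed.

Lemma der_ord_succ m D : is_der_ord m D -> is_der_ord m.+1 D.
Proof.
elim: m D => [|m IH] D ordD; apply: der_ordS (der_ord_additive ordD) _ => x.
  by move=> y; rewrite /leibniz_gap !ordD !mul0r !subr0.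
exact/IH/der_ord_gap.
Qed.

Lemma der_ord_leq m k D : (m <= k)%N -> is_der_ord m D -> is_der_ord k D.
Proof.
move=> /subnK <-; elim: (k - m)%N => [//|j IH] ordD.
by rewrite addSn; apply/der_ord_succ/IH.
Qed.

Lemma derivation_der_ord1 d : is_derivation d -> is_der_ord 1 d.
Proof.
case=> dD dM; apply: der_ordS => // x y.
by rewrite /leibniz_gap dM; ring.
Qed.

Lemma leibniz_gap_comp x d D : is_derivation d ->
  leibniz_gap x (d \o D) =1 fun y => d (leibniz_gap x D y) + D x * d y + d x * D y.
Proof. by case=> dD dM y; rewrite /leibniz_gap /= !(addmorphB dD) !dM; ring. Qed.

Lemma der_ord_comp m d D : is_derivation d -> is_der_ord m D -> is_der_ord m.+1 (d \o D).
Proof.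
move=> der_d; elim: m D => [|m IH] D ordD.
  by apply: der_ord_succ => x /=; rewrite ordD (addmorph0 der_d.1).
apply: der_ordS => [x y|x]; first by rewrite /= (der_ord_additive ordD) der_d.1.
apply: eq_der_ord (fun y => esym (leibniz_gap_comp x D der_d y)) _.
apply: der_ordD; last exact: der_ordMl.
apply: der_ordD; first exact/IH/der_ord_gap.
by apply/der_ordMl/(der_ord_leq _ (derivation_der_ord1 der_d)).
Qed.

Lemma der_ord_iter_gap m z D : is_der_ord m D -> iter m (leibniz_gap z) D =1 fun=> 0.
Proof.
elim: m D => [//|m IH] D ordD y.
by rewrite iterSr; apply/IH/der_ord_gap.
Qed.

Lemma iter_leibniz_gap_comp k z d G : is_derivation d ->
  iter k.+1 (leibniz_gap z) (d \o G) =1 fun y =>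
    d (iter k.+1 (leibniz_gap z) G y) + iter k (leibniz_gap z) G z * d y
    + k.+1%:R * d z * iter k (leibniz_gap z) G y.
Proof.
move=> der_d; elim: k => [|k IH] y.
  by rewrite [LHS]/= (leibniz_gap_comp _ _ der_d) /=; ring.
rewrite iterS (eq_leibniz_gap _ IH) !iterS; move: (iter k _ G) => C.
by rewrite /leibniz_gap !(addmorphB der_d.1, der_d.2) !mulrS; ring.
Qed.

Section Compositions.
Variables (I : Type) (d : I -> R -> R).
Hypothesis der_d : forall i, is_derivation (d i).

Definition compose_ders (s : seq I) : R -> R := foldr (fun i g => d i \o g) id s.

Lemma der_ord_compose i s : is_der_ord (size s).+1 (d i \o compose_ders s).
Proof.
elim: s i => [|j s IH] i /=; last exact: der_ord_comp (der_d i) (IH j).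
exact: eq_der_ord (derivation_der_ord1 (der_d i)).
Qed.

Lemma iter_leibniz_gap_compose z i s :
  iter (size s) (leibniz_gap z) (d i \o compose_ders s) z
  = (size s).+1`!%:R * \prod_(j <- i :: s) d j z.
Proof.
elim: s i => [|j s IH] i; first by rewrite big_seq1 mul1r.
rewrite [size _]/= iter_leibniz_gap_comp //.
rewrite (der_ord_iter_gap _ (der_ord_compose j s)) (addmorph0 (der_d i).1) add0r.
by rewrite IH [in RHS]factS natrM !big_cons; ring.
Qed.

End Compositions.
End DerivationOrder.

Section CommonNonRoot.
Variable R : idomainType.
Hypothesis charR0 : [pchar R] =i pred0.

Lemma eventually_all (I : eqType) (P : I -> nat -> Prop) (s : seq I) :
  (forall i, i \in s -> exists N, forall t, (N < t)%N -> P i t) ->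
  exists N, forall t, (N < t)%N -> forall i, i \in s -> P i t.
Proof.
elim: s => [|i s IH] evP; first by exists 0%N.
have [N1 P_i] := evP i (mem_head i s).
have [N2 P_s] : exists N, forall t, (N < t)%N -> forall j, j \in s -> P j t.
  by apply: IH => j s_j; apply: evP; rewrite inE s_j orbT.
exists (maxn N1 N2) => t; rewrite gtn_max => /andP[ltN1 ltN2] j.
by rewrite inE => /predU1P[->|/P_s]; [exact: P_i | apply].
Qed.

Lemma affine_nat_eventually_neq0 (a b : R) : (a != 0) || (b != 0) ->
  exists N, forall t, (N < t)%N -> a + b *+ t != 0.
Proof.
move=> ab_nz; have [[t0 root_t0]|no_root] := classic (exists t0, a + b *+ t0 = 0); last first.
  by exists 0%N => t _; apply/eqP => root_t; apply: no_root; exists t.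
exists t0 => t lt_t0t; rewrite -(subnKC (ltnW lt_t0t)) mulrnDr addrA root_t0 add0r.
rewrite -mulr_natr mulf_eq0 negb_or (pcharf0P _).1 // subn_eq0 -ltnNge lt_t0t andbT.
apply: contraTneq ab_nz => b0; move: root_t0.
by rewrite b0 mul0rn addr0 => ->; rewrite eqxx.
Qed.

Lemma additive_common_nonroot (I : eqType) (f : I -> R -> R) (s : seq I) :
  (forall i, {morph f i : x y / x + y}) -> (forall i, exists x, f i x != 0) ->
  exists z, forall i, i \in s -> f i z != 0.
Proof.
move=> fD f_nz; elim: s => [|i s [z f_s_z]]; first by exists 0.
have [x f_i_x] := f_nz i.
have [N f_line] : exists N, forall t, (N < t)%N ->
    forall j, j \in i :: s -> f j (z + x *+ t) != 0.
  apply: eventually_all => j ij_s.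
  have [|N f_j] := @affine_nat_eventually_neq0 (f j z) (f j x).
    by move: ij_s; rewrite inE => /predU1P[->|/f_s_z ->]; rewrite ?f_i_x ?orbT.
  by exists N => t /f_j; rewrite (fD j) (addmorphMn (fD j)).
by exists (z + x *+ N.+1) => j; apply: f_line.
Qed.

End CommonNonRoot.

Theorem theorem1p2 (R : idomainType) (charR0 : [pchar R] =i pred0)
  (n : nat) (n_gt0 : (0 < n)%N) (d : 'I_n -> R -> R) :
  (forall i, is_derivation (d i)) ->
  (forall i, exists x, d i x != 0) ->
  is_der_ord n (comp_ders d) /\ ~ is_der_ord n.-1 (comp_ders d).
Proof.
move=> der_d d_nz.
have [z d_z] := additive_common_nonroot charR0 (enum 'I_n) (fun i => (der_d i).1) d_nz.
case def_enum: (enum 'I_n) (size_enum_ord n) d_z => [|i s] /= size_n;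
  first by rewrite -size_n in n_gt0.
move=> {}d_z; rewrite /comp_ders def_enum /= foldr_map -/(compose_ders d s).
split; first by have := der_ord_compose der_d i s; rewrite size_n.
rewrite -(congr1 predn size_n) => /(der_ord_iter_gap z)/(_ z)/eqP.
rewrite iter_leibniz_gap_compose //; apply/negP.
rewrite mulf_neq0 ?(pcharf0P _).1 -?lt0n ?fact_gt0 // prodf_seq_neq0.
by apply/allP => j /d_z.
Qed.
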